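(* Let $s\in[\tfrac12,1)$. Define $\phi_s:\tilde\Delta\to\tilde\Delta$, using the fundamental parallelogram $P$ with vertices $\pm(-3/2,\sqrt3/2)$, $\pm(1/2,\sqrt3/2)$ to represent points, by \[ \phi_s(x,y)=\begin{cases}(x,y)+(\tfrac12,-\tfrac{\sqrt3}{2}) & \text{if } y\ge 0,\\ (x,y)+(-\tfrac12,\tfrac{\sqrt3}{2}) & \text{if } y<0,\end{cases} \] taken modulo $\Lambda$. Then $\phi_s$ conjugates $\tilde f_s$ to $\tilde f_{1-s}$, i.e. $\phi_s\circ\tilde f_s=\tilde f_{1-s}\circ\phi_s$.
   Context: Let $\Lambda\subset\mathbb{R}^2$ be the lattice generated by $(2,0)$ and $(1,-\sqrt3)$, and let $\tilde\Delta=\mathbb{R}^2/\Lambda$. Subsets of $\mathbb{R}^2$ are regarded as subsets of $\tilde\Delta$ via the projection. Let $A_0$ be the equilateral triangle with vertices $a_1=(-1,0)$, $a_2=(-\tfrac12,\tfrac{\sqrt3}{2})$, $a_3=(0,0)$, and for $n=1,2,3$ let $A_n$ be the reflection of $A_0$ in the line through $a_n$ and $a_{n+1 \bmod 3}$. Let $\iota(x,y)=(-x,-y)$. Let $\omega_0=(1,0)$, $\omega_1=(-\tfrac12,\tfrac{\sqrt3}{2})$, $\omega_2=(-\tfrac12,-\tfrac{\sqrt3}{2})$. For a parameter $u\in(0,1)$ and $i\in\{0,1,2\}$ define $\tilde f_i(x,y)=(x,y)+\sigma_i u\,\omega_i \bmod \Lambda$, where $\sigma_i=1$ if $(x,y)\in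 \bigcup_{\alpha\ne 3-i}A_\alpha\cup\iota(A_{3-i})$ and $\sigma_i=-1$ otherwise; the tetrahedral PET is $\tilde f_u=\tilde f_2\circ\tilde f_1\circ\tilde f_0$. It is a piecewise translation, undefined on the boundaries of the pieces where it is discontinuous; the conjugacy identity is understood where both sides are defined. *)

From Stdlib Require Import Reals Lra ZArith ClassicalDescription.
Open Scope R_scope.

Definition pt := (R * R)%type.
Definition padd (p q : pt) : pt := (fst p + fst q, snd p + snd q).
Definition psub (p q : pt) : pt := (fst p - fst q, snd p - snd q).
Definition pscale (c : R) (p : pt) : pt := (c * fst p, c * snd p).
Definition pdot (p q : pt) : R := fst p * fst q + snd p * snd q.
Definition pdist (p q : pt) : R := sqrt (pdot (psub p q) (psub p q)).

Definition inLambda (v : pt) : Prop :=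
  exists m n : Z, v = padd (pscale (IZR m) (2, 0)) (pscale (IZR n) (1, - sqrt 3)).

(* Congruence modulo Lambda: equality in the torus R^2 / Lambda. *)
Definition cong (p q : pt) : Prop := inLambda (psub p q).

Definition in_tri (a b c p : pt) : Prop :=
  exists l1 l2 l3 : R, 0 <= l1 /\ 0 <= l2 /\ 0 <= l3 /\ l1 + l2 + l3 = 1 /\
    p = padd (pscale l1 a) (padd (pscale l2 b) (pscale l3 c)).

Definition reflect (a b p : pt) : pt :=
  let d := psub b a in
  let proj := padd a (pscale (pdot (psub p a) d / pdot d d) d) in
  psub (pscale 2 proj) p.

Definition avert (n : nat) : pt :=
  match n with
  | 1%nat => (-1, 0)
  | 2%nat => (-(1/2), sqrt 3 / 2)
  | _ => (0, 0)
  end.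

Definition nextidx (n : nat) : nat :=
  match n with 1%nat => 2%nat | 2%nat => 3%nat | _ => 1%nat end.

Definition A0 (p : pt) : Prop := in_tri (avert 1) (avert 2) (avert 3) p.

(* A_n = reflection of A_0 in the line through a_n and a_{n+1 mod 3};
   since a reflection is an involution, p is in the image iff its
   reflection is in A_0. *)
Definition A (n : nat) (p : pt) : Prop :=
  match n with
  | 0%nat => A0 p
  | _ => A0 (reflect (avert n) (avert (nextidx n)) p)
  end.

Definition iota_set (X : pt -> Prop) (p : pt) : Prop := X (pscale (-1) p).

Definition omega (i : nat) : pt :=
  match i with
  | 0%nat => (1, 0)
  | 1%nat => (-(1/2), sqrt 3 / 2)
  | _ => (-(1/2), - (sqrt 3 / 2))
  end.

Definition Splus (i : nat) (p : pt) : Prop :=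
  exists p', cong p p' /\
    ((exists alpha : nat, (alpha <= 3)%nat /\ alpha <> (3 - i)%nat /\ A alpha p')
     \/ iota_set (A (3 - i)) p').

Definition sigma (i : nat) (p : pt) : R :=
  if excluded_middle_informative (Splus i p) then 1 else -1.

Definition ftilde (i : nat) (u : R) (p : pt) : pt :=
  padd p (pscale (sigma i p * u) (omega i)).

Definition PET (u : R) (p : pt) : pt :=
  ftilde 2 u (ftilde 1 u (ftilde 0 u p)).

(* f_i is defined at p iff it is continuous there, i.e. the sign sigma_i is
   locally constant around p. *)
Definition fdefined (i : nat) (p : pt) : Prop :=
  exists eps, 0 < eps /\ forall q, pdist p q < eps -> (Splus i q <-> Splus i p).

Definition PET_defined (u : R) (p : pt) : Prop :=
  fdefined 0 p /\ fdefined 1 (ftilde 0 u p) /\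
  fdefined 2 (ftilde 1 u (ftilde 0 u p)).

(* Closed fundamental parallelogram P with vertices
   +-(-3/2, sqrt3/2), +-(1/2, sqrt3/2), i.e. {a(2,0)+b(1,-sqrt3) : |a|,|b| <= 1/2}. *)
Definition inP (q : pt) : Prop :=
  exists a b : R, -(1/2) <= a <= 1/2 /\ -(1/2) <= b <= 1/2 /\
    q = padd (pscale a (2, 0)) (pscale b (1, - sqrt 3)).

Definition phi_on_P (q : pt) : pt :=
  if Rle_dec 0 (snd q) then padd q (1/2, - (sqrt 3 / 2))
  else padd q (-(1/2), sqrt 3 / 2).

(* In the oblique coordinates (a, b) of z = a (1,0) + b (1/2, √3/2) the lattice
   Λ becomes 2ℤ × 2ℤ, φ_s becomes the translation by (1,-1), and σ_i(z) = 1
   exactly when ℓ_i(z) lies in [0,1] modulo 2, where ℓ_0 = b, ℓ_1 = a + b - 1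
   and ℓ_2 = a - 1.  If y ≡ x + v with ℓ_i(y) - ℓ_i(x) odd and f_i continuous
   at x, then σ_i(y) = -σ_i(x); hence f_i with parameter 1 - s at y and f_i
   with parameter s at x differ by v - σ_i(x) ω_i ≡ v + ω_i, since 2 ω_i ∈ Λ.
   Starting from v = (1,-1), the successive offsets v, v + ω_0, v + ω_0 + ω_1
   shift ℓ_0, ℓ_1, ℓ_2 respectively by odd amounts, and ω_0 + ω_1 + ω_2 = 0
   returns the offset to (1,-1).  Neither the range of s nor the choice of
   representatives in P plays a role. *)

From Pilot Require Import Defs.
From Stdlib Require Import Reals Lra Lia ZArith ClassicalDescription.
Open Scope R_scope.

Lemma sqrt3_sq : sqrt 3 * sqrt 3 = 3.
Proof. apply sqrt_sqrt; lra. Qed.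

Ltac sqrt3_field :=
  generalize sqrt3_sq; generalize (sqrt 3); intros h Hh;
  let E2 := fresh in let E3 := fresh in let E4 := fresh in
  assert (E2 : h ^ 2 = 3) by (rewrite <- Hh; ring);
  assert (E3 : h ^ 3 = 3 * h) by (rewrite <- Hh; ring);
  assert (E4 : h ^ 4 = 9) by (replace 9 with (3 * 3) by ring; rewrite <- Hh; ring);
  field_simplify_eq; rewrite ?E4, ?E3, ?E2; ring.

Definition ca (p : pt) : R := fst p - snd p * sqrt 3 / 3.
Definition cb (p : pt) : R := 2 * snd p * sqrt 3 / 3.
Definition of_coords (a b : R) : pt := (a + b / 2, b * sqrt 3 / 2).

Lemma ca_of_coords a b : ca (of_coords a b) = a.
Proof. unfold ca, of_coords; simpl; sqrt3_field. Qed.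

Lemma cb_of_coords a b : cb (of_coords a b) = b.
Proof. unfold cb, of_coords; simpl; sqrt3_field. Qed.

Lemma of_coords_ca_cb p : of_coords (ca p) (cb p) = p.
Proof. destruct p as [x y]; unfold of_coords, ca, cb; simpl; f_equal; sqrt3_field. Qed.

Lemma pt_eq_coords p q : ca p = ca q -> cb p = cb q -> p = q.
Proof.
  intros Ha Hb; rewrite <- (of_coords_ca_cb p), <- (of_coords_ca_cb q), Ha, Hb; reflexivity.
Qed.

Lemma ca_padd p q : ca (padd p q) = ca p + ca q.
Proof. unfold ca, padd; simpl; field. Qed.

Lemma cb_padd p q : cb (padd p q) = cb p + cb q.
Proof. unfold cb, padd; simpl; field. Qed.

Lemma ca_psub p q : ca (psub p q) = ca p - ca q.
Proof. unfold ca, psub; simpl; field. Qed.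

Lemma cb_psub p q : cb (psub p q) = cb p - cb q.
Proof. unfold cb, psub; simpl; field. Qed.

Lemma ca_pscale k p : ca (pscale k p) = k * ca p.
Proof. unfold ca, pscale; simpl; field. Qed.

Lemma cb_pscale k p : cb (pscale k p) = k * cb p.
Proof. unfold cb, pscale; simpl; field. Qed.

Definition eqmod2 (x y : R) : Prop := exists k : Z, x = y + 2 * IZR k.

Lemma eqmod2_refl x : eqmod2 x x.
Proof. exists 0%Z; simpl; lra. Qed.

Lemma eqmod2_sym x y : eqmod2 x y -> eqmod2 y x.
Proof. intros [k Hk]; exists (- k)%Z; rewrite opp_IZR; lra. Qed.

Lemma eqmod2_trans x y z : eqmod2 x y -> eqmod2 y z -> eqmod2 x z.
Proof. intros [k Hk] [l Hl]; exists (k + l)%Z; rewrite plus_IZR; lra. Qed.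

Lemma eqmod2_add x y x' y' : eqmod2 x y -> eqmod2 x' y' -> eqmod2 (x + x') (y + y').
Proof. intros [k Hk] [l Hl]; exists (k + l)%Z; rewrite plus_IZR; lra. Qed.

Lemma floor_spec x : exists n : Z, IZR n <= x < IZR n + 1.
Proof. exists (Int_part x); pose proof (base_Int_part x); lra. Qed.

Lemma eqmod2_reduce x lo : exists y, eqmod2 x y /\ lo <= y < lo + 2.
Proof.
  destruct (floor_spec ((x - lo) / 2)) as [n Hn].
  exists (x - 2 * IZR n); split; [exists n; ring | lra].
Qed.

Lemma inLambda_iff_coords v :
  inLambda v <-> exists M N : Z, ca v = 2 * IZR M /\ cb v = 2 * IZR N.
Proof.
  split.
  - intros [m [n ->]]; exists (m + n)%Z, (- n)%Z.
    rewrite plus_IZR, opp_IZR; unfold ca, cb, padd, pscale; simpl; split; sqrt3_field.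
  - intros [M [N [HM HN]]]; exists (M + N)%Z, (- N)%Z.
    apply pt_eq_coords;
      rewrite ?ca_padd, ?cb_padd, ?ca_pscale, ?cb_pscale, plus_IZR, opp_IZR, ?HM, ?HN;
      unfold ca, cb; simpl; sqrt3_field.
Qed.

Lemma cong_iff_coords p q : cong p q <-> eqmod2 (ca p) (ca q) /\ eqmod2 (cb p) (cb q).
Proof.
  unfold cong, eqmod2; rewrite inLambda_iff_coords, ca_psub, cb_psub.
  split; [intros [M [N [HM HN]]]; split; [exists M | exists N]; lra
         | intros [[M HM] [N HN]]; exists M, N; lra].
Qed.

Lemma cong_refl p : cong p p.
Proof. rewrite cong_iff_coords; split; apply eqmod2_refl. Qed.

Lemma cong_sym p q : cong p q -> cong q p.
Proof. rewrite !cong_iff_coords; intros [Ha Hb]; split; apply eqmod2_sym; assumption. Qed.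

Lemma cong_trans p q r : cong p q -> cong q r -> cong p r.
Proof.
  rewrite !cong_iff_coords; intros [Ha Hb] [Ha' Hb'].
  split; eapply eqmod2_trans; eassumption.
Qed.

Lemma cong_padd p q v : cong p q -> cong (padd p v) (padd q v).
Proof.
  rewrite !cong_iff_coords, !ca_padd, !cb_padd; intros [Ha Hb].
  split; apply eqmod2_add; auto using eqmod2_refl.
Qed.

Definition piece (alpha : nat) (a b : R) : Prop :=
  match alpha with
  | 0%nat => -1 <= a /\ 0 <= b /\ a + b <= 0
  | 1%nat => a <= -1 /\ b <= 1 /\ -1 <= a + b
  | 2%nat => a <= 0 /\ b <= 1 /\ 0 <= a + b
  | _ => a <= 0 /\ b <= 0 /\ -1 <= a + b
  end.

Lemma ca_avert1 : ca (avert 1) = -1. Proof. unfold ca; simpl; field. Qed.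
Lemma cb_avert1 : cb (avert 1) = 0. Proof. unfold cb; simpl; field. Qed.
Lemma ca_avert2 : ca (avert 2) = -1. Proof. unfold ca; simpl; sqrt3_field. Qed.
Lemma cb_avert2 : cb (avert 2) = 1. Proof. unfold cb; simpl; sqrt3_field. Qed.
Lemma ca_avert3 : ca (avert 3) = 0. Proof. unfold ca; simpl; field. Qed.
Lemma cb_avert3 : cb (avert 3) = 0. Proof. unfold cb; simpl; field. Qed.

Lemma A0_iff_piece p : A0 p <-> piece 0 (ca p) (cb p).
Proof.
  unfold A0, in_tri; cbn [piece]; split.
  - intros [l1 [l2 [l3 [H1 [H2 [H3 [Hsum ->]]]]]]].
    rewrite !ca_padd, !cb_padd, !ca_pscale, !cb_pscale,
      ca_avert1, cb_avert1, ca_avert2, cb_avert2, ca_avert3, cb_avert3; lra.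
  - intros [Ha [Hb Hab]]; exists (- (ca p + cb p)), (cb p), (ca p + 1).
    do 4 (split; [lra|]).
    apply pt_eq_coords; rewrite ?ca_padd, ?cb_padd, ?ca_pscale, ?cb_pscale,
      ?ca_avert1, ?cb_avert1, ?ca_avert2, ?cb_avert2, ?ca_avert3, ?cb_avert3; lra.
Qed.

Lemma reflect_unit a b p : pdot (psub b a) (psub b a) = 1 ->
  reflect a b p = psub (pscale 2 (padd a (pscale (pdot (psub p a) (psub b a)) (psub b a)))) p.
Proof. intros Hd; unfold reflect; cbv zeta; rewrite Hd, Rdiv_1_r; reflexivity. Qed.

Lemma reflect_a1a2 p : ca (reflect (avert 1) (avert 2) p) = - ca p - 2 /\
                       cb (reflect (avert 1) (avert 2) p) = ca p + cb p + 1.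
Proof.
  rewrite reflect_unit by (unfold pdot, psub; simpl; sqrt3_field).
  destruct p; unfold ca, cb, pdot, psub, padd, pscale; simpl; split; sqrt3_field.
Qed.

Lemma reflect_a2a3 p : ca (reflect (avert 2) (avert 3) p) = - cb p /\
                       cb (reflect (avert 2) (avert 3) p) = - ca p.
Proof.
  rewrite reflect_unit by (unfold pdot, psub; simpl; sqrt3_field).
  destruct p; unfold ca, cb, pdot, psub, padd, pscale; simpl; split; sqrt3_field.
Qed.

Lemma reflect_a3a1 p : ca (reflect (avert 3) (avert 1) p) = ca p + cb p /\
                       cb (reflect (avert 3) (avert 1) p) = - cb p.
Proof.
  rewrite reflect_unit by (unfold pdot, psub; simpl; sqrt3_field).
  destruct p; unfold ca, cb, pdot, psub, padd, pscale; simpl; split; sqrt3_field.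
Qed.

(* For alpha >= 3 the definition of [A] falls back to the vertices a_3, a_1,
   so [A alpha] is [A 3]. *)
Lemma A_iff_piece alpha p : A alpha p <-> piece alpha (ca p) (cb p).
Proof.
  destruct alpha as [|[|[|alpha]]].
  - apply A0_iff_piece.
  - change (A0 (reflect (avert 1) (avert 2) p) <-> piece 1 (ca p) (cb p)).
    rewrite A0_iff_piece; destruct (reflect_a1a2 p) as [-> ->]; simpl; lra.
  - change (A0 (reflect (avert 2) (avert 3) p) <-> piece 2 (ca p) (cb p)).
    rewrite A0_iff_piece; destruct (reflect_a2a3 p) as [-> ->]; simpl; lra.
  - change (A0 (reflect (avert 3) (avert 1) p) <-> piece 3 (ca p) (cb p)).
    rewrite A0_iff_piece; destruct (reflect_a3a1 p) as [-> ->]; simpl; lra.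
Qed.

Definition mod2_in01 (g : R) : Prop := exists k : Z, 2 * IZR k <= g <= 2 * IZR k + 1.

Lemma mod2_in01_eqmod2 g g' : eqmod2 g g' -> mod2_in01 g <-> mod2_in01 g'.
Proof.
  intros [n Hn]; split; intros [k Hk].
  - exists (k - n)%Z; rewrite minus_IZR; lra.
  - exists (k + n)%Z; rewrite plus_IZR; lra.
Qed.

Lemma mod2_in01_iff_even g n : IZR n < g < IZR n + 1 -> mod2_in01 g <-> Z.even n = true.
Proof.
  intros Hg; split.
  - intros [k Hk].
    assert (n < 2 * k + 1)%Z by (apply lt_IZR; rewrite plus_IZR, mult_IZR; simpl; lra).
    assert (2 * k < n + 1)%Z by (apply lt_IZR; rewrite plus_IZR, mult_IZR; simpl; lra).
    replace n with (2 * k)%Z by lia; apply Z.even_mul.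
  - intros Hn; apply Z.even_spec in Hn; destruct Hn as [k ->].
    exists k; rewrite mult_IZR in Hg; simpl in Hg; lra.
Qed.

Lemma mod2_in01_succ g : (forall n : Z, g <> IZR n) -> mod2_in01 (g + 1) <-> ~ mod2_in01 g.
Proof.
  intros Hg; destruct (floor_spec g) as [n [[Hlt | Heq] Hn]];
    [| now destruct (Hg n)].
  rewrite (mod2_in01_iff_even g n), (mod2_in01_iff_even (g + 1) (n + 1))
    by (rewrite ?plus_IZR; simpl; lra).
  rewrite Z.even_add; destruct (Z.even n); simpl; intuition discriminate.
Qed.

Lemma mod2_in01_locally_constant_nonint g d : 0 < d ->
  (forall t, -d < t < d -> (mod2_in01 (g + t) <-> mod2_in01 g)) ->
  forall n : Z, g <> IZR n.
Proof.
  intros Hd Hloc n ->.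
  set (t := Rmin (d / 2) (1 / 2)).
  assert (0 < t) by (apply Rmin_pos; lra).
  assert (t <= d / 2) by apply Rmin_l.
  assert (t <= 1 / 2) by apply Rmin_r.
  pose proof (Hloc t ltac:(lra)) as Hright.
  pose proof (Hloc (- t) ltac:(lra)) as Hleft.
  rewrite (mod2_in01_iff_even _ n) in Hright by lra.
  rewrite (mod2_in01_iff_even _ (n - 1)) in Hleft by (rewrite minus_IZR; simpl; lra).
  rewrite Z.even_sub in Hleft; destruct (Z.even n); simpl in *; intuition discriminate.
Qed.

Definition sign_lin (i : nat) (z : pt) : R :=
  match i with 0%nat => cb z | 1%nat => ca z + cb z | _ => ca z end.

Definition sign_offset (i : nat) : R := match i with 0%nat => 0 | _ => 1 end.

Lemma sign_lin_padd i z v : sign_lin i (padd z v) = sign_lin i z + sign_lin i v.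
Proof. destruct i as [|[|i]]; simpl; rewrite ?ca_padd, ?cb_padd; ring. Qed.

Lemma sign_lin_pscale i t v : sign_lin i (pscale t v) = t * sign_lin i v.
Proof. destruct i as [|[|i]]; simpl; rewrite ?ca_pscale, ?cb_pscale; ring. Qed.

Lemma sign_lin_cong i z z' : cong z z' -> eqmod2 (sign_lin i z) (sign_lin i z').
Proof.
  rewrite cong_iff_coords; intros [Ha Hb].
  destruct i as [|[|i]]; simpl; auto using eqmod2_add.
Qed.

Lemma Splus_cong i z z' : cong z z' -> Splus i z' -> Splus i z.
Proof. intros Hzz' [p' [Hz'p' Hp']]; exists p'; split; [eapply cong_trans|]; eassumption. Qed.

Lemma Splus_of_coords i z a b :
  eqmod2 (ca z) a -> eqmod2 (cb z) b -> Splus i (of_coords a b) -> Splus i z.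
Proof.
  intros Ha Hb; apply Splus_cong.
  rewrite cong_iff_coords, ca_of_coords, cb_of_coords; auto.
Qed.

Lemma Splus_of_piece i alpha a b : (alpha <= 3)%nat -> alpha <> (3 - i)%nat ->
  piece alpha a b -> Splus i (of_coords a b).
Proof.
  intros Hal Hne Hp; exists (of_coords a b); split; [apply cong_refl|].
  left; exists alpha; rewrite A_iff_piece, ca_of_coords, cb_of_coords; auto.
Qed.

Lemma Splus_of_iota_piece i a b : piece (3 - i) (- a) (- b) -> Splus i (of_coords a b).
Proof.
  intros Hp; exists (of_coords a b); split; [apply cong_refl|].
  right; unfold iota_set.
  rewrite A_iff_piece, ca_pscale, cb_pscale, ca_of_coords, cb_of_coords.
  replace (-1 * a) with (- a) by ring; replace (-1 * b) with (- b) by ring; exact Hp.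
Qed.

Ltac solve_piece := first [lia | simpl; lra].

Lemma Splus0_cover a b : 0 <= b <= 1 -> -1 - b <= a <= 1 - b -> Splus 0 (of_coords a b).
Proof.
  intros Hb Ha.
  destruct (Rle_dec a (-1)); [apply (Splus_of_piece 0 1); solve_piece|].
  destruct (Rle_dec a (- b)); [apply (Splus_of_piece 0 0); solve_piece|].
  destruct (Rle_dec a 0); [apply (Splus_of_piece 0 2); solve_piece|].
  apply Splus_of_iota_piece; solve_piece.
Qed.

Lemma Splus1_cover a b : -1 <= a + b <= 0 -> -1 <= b <= 1 -> Splus 1 (of_coords a b).
Proof.
  intros Hab Hb.
  destruct (Rle_dec a (-1)); [apply (Splus_of_piece 1 1); solve_piece|].
  destruct (Rle_dec 0 b); [apply (Splus_of_piece 1 0); solve_piece|].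
  destruct (Rle_dec a 0); [apply (Splus_of_piece 1 3); solve_piece|].
  apply Splus_of_iota_piece; solve_piece.
Qed.

(* The last piece, iota(A_1), sits at a + 2 rather than a. *)
Lemma Splus2_cover a b : -1 <= a <= 0 -> -1 <= b <= 1 -> Splus 2 (of_coords a b).
Proof.
  intros Ha Hb.
  destruct (Rle_dec (- a) b); [apply (Splus_of_piece 2 2); solve_piece|].
  destruct (Rle_dec 0 b); [apply (Splus_of_piece 2 0); solve_piece|].
  destruct (Rle_dec (-1) (a + b)); [apply (Splus_of_piece 2 3); solve_piece|].
  apply (Splus_of_coords _ _ (a + 2) b).
  - rewrite ca_of_coords; exists (-1)%Z; simpl; lra.
  - rewrite cb_of_coords; apply eqmod2_refl.
  - apply Splus_of_iota_piece; solve_piece.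
Qed.

(* Each admissible piece lies in a strip 2k <= ℓ_i <= 2k + 1 with k = 0 or k = -1. *)
Lemma Splus_region_mod2_in01 i p : (i <= 2)%nat ->
  (exists alpha : nat, (alpha <= 3)%nat /\ alpha <> (3 - i)%nat /\ A alpha p)
    \/ iota_set (A (3 - i)) p ->
  mod2_in01 (sign_lin i p - sign_offset i).
Proof.
  unfold iota_set.
  intros Hi [[alpha [Hal [Hne HA]]] | HA]; rewrite A_iff_piece in HA;
    rewrite ?ca_pscale, ?cb_pscale in HA;
    destruct i as [|[|[|i]]]; try lia;
    try (destruct alpha as [|[|[|[|alpha]]]]; try (simpl in Hne; lia));
    simpl in *; first [exists 0%Z; simpl; lra | exists (-1)%Z; simpl; lra].
Qed.

Lemma Splus_iff i z : (i <= 2)%nat ->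
  Splus i z <-> mod2_in01 (sign_lin i z - sign_offset i).
Proof.
  intros Hi; split.
  - intros [p [Hzp Hp]].
    rewrite (mod2_in01_eqmod2 _ (sign_lin i p - sign_offset i)).
    + exact (Splus_region_mod2_in01 i p Hi Hp).
    + apply eqmod2_add; [apply sign_lin_cong; exact Hzp | apply eqmod2_refl].
  - intros [k Hk]; destruct i as [|[|[|i]]]; simpl in Hk; try lia.
    + destruct (eqmod2_reduce (ca z) (-1 - (cb z - 2 * IZR k))) as [a [Ha Ha']].
      apply (Splus_of_coords _ _ a (cb z - 2 * IZR k)); [exact Ha | exists k; ring |].
      apply Splus0_cover; lra.
    + destruct (eqmod2_reduce (cb z) (-1)) as [b [Hb Hb']].
      apply (Splus_of_coords _ _ (ca z + cb z - 2 * IZR k - 2 - b) b); [| exact Hb |].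
      * destruct Hb as [n Hn]; exists (k + 1 - n)%Z; rewrite minus_IZR, plus_IZR; simpl; lra.
      * apply Splus1_cover; lra.
    + destruct (eqmod2_reduce (cb z) (-1)) as [b [Hb Hb']].
      apply (Splus_of_coords _ _ (ca z - 2 * IZR k - 2) b); [| exact Hb |].
      * exists (k + 1)%Z; rewrite plus_IZR; simpl; lra.
      * apply Splus2_cover; lra.
Qed.

Lemma pdist_padd_pscale z t d : pdot d d = 1 -> pdist z (padd z (pscale t d)) = Rabs t.
Proof.
  intros Hd; unfold pdist; rewrite <- sqrt_Rsqr_abs; f_equal.
  destruct z as [x y], d as [d1 d2]; unfold pdot, psub, padd, pscale, Rsqr in *; simpl in *.
  transitivity (t * t * (d1 * d1 + d2 * d2)); [ring | rewrite Hd; ring].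
Qed.

Definition sign_dir (i : nat) : pt := match i with 0%nat => of_coords 0 1 | _ => (1, 0) end.

Lemma sign_dir_unit i : pdot (sign_dir i) (sign_dir i) = 1.
Proof. destruct i; unfold pdot, of_coords; simpl; [sqrt3_field | ring]. Qed.

Lemma sign_lin_dir i : sign_lin i (sign_dir i) = 1.
Proof.
  destruct i as [|[|i]]; simpl; rewrite ?cb_of_coords; unfold ca, cb; simpl; field.
Qed.

Lemma fdefined_nonint i z : (i <= 2)%nat -> fdefined i z ->
  forall n : Z, sign_lin i z - sign_offset i <> IZR n.
Proof.
  intros Hi [eps [Heps Hloc]].
  apply (mod2_in01_locally_constant_nonint _ eps Heps); intros t Ht.
  specialize (Hloc (padd z (pscale t (sign_dir i)))).
  rewrite pdist_padd_pscale, !Splus_iff, sign_lin_padd, sign_lin_pscale, sign_lin_dir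
    in Hloc by (apply sign_dir_unit || exact Hi).
  replace (sign_lin i z - sign_offset i + t) with (sign_lin i z + t * 1 - sign_offset i) by ring.
  apply Hloc, Rabs_def1; lra.
Qed.

Lemma sigma_cases i p : Defs.sigma i p = 1 \/ Defs.sigma i p = -1.
Proof. unfold Defs.sigma; destruct (excluded_middle_informative (Splus i p)); auto. Qed.

Lemma sigma_flip i x y : (i <= 2)%nat -> fdefined i x ->
  eqmod2 (sign_lin i y) (sign_lin i x + 1) -> Defs.sigma i y = - Defs.sigma i x.
Proof.
  intros Hi Hx Hy.
  assert (Hflip : Splus i y <-> ~ Splus i x).
  { rewrite !Splus_iff by exact Hi.
    rewrite (mod2_in01_eqmod2 _ (sign_lin i x - sign_offset i + 1)).
    - apply mod2_in01_succ, fdefined_nonint; assumption.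
    - replace (sign_lin i x - sign_offset i + 1) with (sign_lin i x + 1 + - sign_offset i) by ring.
      apply eqmod2_add; [exact Hy | apply eqmod2_refl]. }
  unfold Defs.sigma; destruct (excluded_middle_informative (Splus i y));
    destruct (excluded_middle_informative (Splus i x)); tauto || lra.
Qed.

Lemma ca_omega0 : ca (omega 0) = 1. Proof. unfold ca; simpl; field. Qed.
Lemma cb_omega0 : cb (omega 0) = 0. Proof. unfold cb; simpl; field. Qed.
Lemma ca_omega1 : ca (omega 1) = -1. Proof. unfold ca; simpl; sqrt3_field. Qed.
Lemma cb_omega1 : cb (omega 1) = 1. Proof. unfold cb; simpl; sqrt3_field. Qed.
Lemma ca_omega2 : ca (omega 2) = 0. Proof. unfold ca; simpl; sqrt3_field. Qed.
Lemma cb_omega2 : cb (omega 2) = -1. Proof. unfold cb; simpl; sqrt3_field. Qed.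

Lemma omega_coords_int i :
  (exists n : Z, ca (omega i) = IZR n) /\ (exists n : Z, cb (omega i) = IZR n).
Proof.
  destruct i as [|[|i]].
  - rewrite ca_omega0, cb_omega0; split; [exists 1%Z | exists 0%Z]; reflexivity.
  - rewrite ca_omega1, cb_omega1; split; [exists (-1)%Z | exists 1%Z]; reflexivity.
  - change (omega (S (S i))) with (omega 2).
    rewrite ca_omega2, cb_omega2; split; [exists 0%Z | exists (-1)%Z]; reflexivity.
Qed.

(* The two sides differ by (sg + 1) cw, which is 0 or 2 cw. *)
Lemma eqmod2_opposite_step cy cx cv cw sg s :
  sg = 1 \/ sg = -1 -> (exists n : Z, cw = IZR n) -> eqmod2 cy (cx + cv) ->
  eqmod2 (cy + - sg * (1 - s) * cw) (cx + sg * s * cw + (cv + cw)).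
Proof.
  intros [-> | ->] [n ->] [k Hk].
  - exists (k - n)%Z; rewrite minus_IZR; lra.
  - exists k; lra.
Qed.

Lemma ftilde_opposite_signs i s x y v :
  Defs.sigma i y = - Defs.sigma i x -> cong y (padd x v) ->
  cong (ftilde i (1 - s) y) (padd (ftilde i s x) (padd v (omega i))).
Proof.
  intros Hs; rewrite !cong_iff_coords; unfold ftilde.
  rewrite !ca_padd, !cb_padd, !ca_pscale, !cb_pscale, Hs.
  destruct (omega_coords_int i) as [Hca Hcb]; intros [Ha Hb].
  split; apply eqmod2_opposite_step; auto using sigma_cases.
Qed.

Lemma ftilde_conj i s x y v : (i <= 2)%nat -> fdefined i x ->
  cong y (padd x v) -> eqmod2 (sign_lin i v) 1 ->
  cong (ftilde i (1 - s) y) (padd (ftilde i s x) (padd v (omega i))).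
Proof.
  intros Hi Hx Hy Hv; apply ftilde_opposite_signs; [|exact Hy].
  apply (sigma_flip i x y Hi Hx).
  eapply eqmod2_trans; [apply sign_lin_cong, Hy|].
  rewrite sign_lin_padd; apply eqmod2_add; [apply eqmod2_refl | exact Hv].
Qed.

Definition phi_shift : pt := of_coords 1 (-1).

(* Both branches of phi_s translate by ±(1,-1) in coordinates, and 2 (1,-1) ∈ Λ. *)
Lemma phi_on_P_cong q : cong (phi_on_P q) (padd q phi_shift).
Proof.
  unfold phi_on_P, phi_shift.
  rewrite cong_iff_coords, !ca_padd, !cb_padd, ca_of_coords, cb_of_coords.
  destruct (Rle_dec 0 (snd q)); split;
    [exists 0%Z | exists 0%Z | exists (-1)%Z | exists 1%Z]; unfold ca, cb; simpl; sqrt3_field.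
Qed.

Lemma shift_offsets_odd :
  eqmod2 (sign_lin 0 phi_shift) 1 /\
  eqmod2 (sign_lin 1 (padd phi_shift (omega 0))) 1 /\
  eqmod2 (sign_lin 2 (padd (padd phi_shift (omega 0)) (omega 1))) 1.
Proof.
  cbn [sign_lin]; unfold phi_shift.
  rewrite !ca_padd, !cb_padd, ca_of_coords, cb_of_coords, ca_omega0, cb_omega0, ca_omega1.
  repeat split; [exists (-1)%Z | exists 0%Z | exists 0%Z]; simpl; lra.
Qed.

Lemma padd_omega_sum v : padd (padd (padd v (omega 0)) (omega 1)) (omega 2) = v.
Proof. destruct v; unfold padd, omega; simpl; f_equal; field. Qed.

Theorem theorem2p2 :
  forall s : R, 1/2 <= s < 1 ->
  forall p q r : pt,
    (* q : representative of p in P, used to compute phi_s(p) *)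
    inP q -> cong p q ->
    (* r : representative of f_s(p) in P, used to compute phi_s(f_s(p)) *)
    inP r -> cong (PET s p) r ->
    (* both sides are defined *)
    PET_defined s p ->
    PET_defined (1 - s) (phi_on_P q) ->
    cong (phi_on_P r) (PET (1 - s) (phi_on_P q)).
Proof.
  intros s _ p q r _ Hpq _ Hpr [D0 [D1 D2]] _.
  destruct shift_offsets_odd as [Odd0 [Odd1 Odd2]].
  assert (H0 : cong (phi_on_P q) (padd p phi_shift)).
  { eapply cong_trans; [apply phi_on_P_cong | apply cong_padd, cong_sym, Hpq]. }
  pose proof (ftilde_conj 0 s _ _ _ ltac:(lia) D0 H0 Odd0) as H1.
  pose proof (ftilde_conj 1 s _ _ _ ltac:(lia) D1 H1 Odd1) as H2.
  pose proof (ftilde_conj 2 s _ _ _ ltac:(lia) D2 H2 Odd2) as H3.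
  rewrite padd_omega_sum in H3.
  eapply cong_trans; [apply phi_on_P_cong|].
  eapply cong_trans; [apply cong_padd, cong_sym, Hpr | apply cong_sym, H3].
Qed.
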